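(* Let $U$ be a one-dimensional quantum walk with one defect. Then $U$ is unitary equivalent to \begin{align*} U_{r_\pm,r_0,\nu_1,\nu_2}={}&|e_1^{-1}\rangle\langle r_0e_1^0+e^{i\nu_1}s_0e_2^0|+|e_2^{1}\rangle\langle -e^{i\nu_2}s_0e_1^0+e^{i(\nu_1+\nu_2)}r_0e_2^0|\\ &+\sum_{n\in\mathbb Z\setminus\{0\}}|e_1^{n-1}\rangle\langle r_\pm e_1^n+s_\pm e_2^n|+|e_2^{n+1}\rangle\langle -s_\pm e_1^n+r_\pm e_2^n| \end{align*} for some $0\le r_\pm,r_0\le1$ and $\nu_1,\nu_2\in\mathbb R$, where $s_\varepsilon=\sqrt{1-r_\varepsilon^2}$ ($\varepsilon=\pm,0$). Moreover, writing $U_{r,\nu}=U_{r_\pm,r_0,\nu_1,\nu_2}$, if $0<r_\varepsilon,r'_\varepsilon<1$ and $\nu_i,\nu'_i\in[0,2\pi)$, then $U_{r,\nu}$ and $U_{r',\nu'}$ are unitary equivalent if and only if $r=r'$ and $\nu=\nu'$.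
   Context: Let $\mathcal H_n=\mathbb C^2$ for $n\in\mathbb Z$, $\mathcal H=\bigoplus_{n\in\mathbb Z}\mathcal H_n$, $P_n$ the orthogonal projection onto $\mathcal H_n$, and $\{e_1^n,e_2^n\}$ the standard basis of $\mathcal H_n$; each $\mathcal H_n$ is identified with $\mathbb C^2$. Dirac notation: $|x\rangle\langle y|$ is the operator $z\mapsto\langle y,z\rangle x$ (inner product conjugate-linear in the first argument). A one-dimensional quantum walk is a unitary $U$ on $\mathcal H$ with $\operatorname{rank}(P_nUP_m)=1$ if $m=n\pm1$ and $0$ otherwise. Every such $U$ can be written as $U=\sum_{n\in\mathbb Z}|\xi_{n-1,n}\rangle\langle\zeta_{n-1,n}|+|\xi_{n+1,n}\rangle\langle\zeta_{n+1,n}|$, where $\{\xi_{n,n+1},\xi_{n+1,n}\}_{n}$ and $\{\zeta_{n,n+1},\zeta_{n+1,n}\}_{n}$ are orthonormal bases of $\mathcal H$ with $\xi_{n,n+1},\zeta_{n+1,n}\in\mathcal H_n$ and $\xi_{n+1,n},\zeta_{n,n+1}\in\mathcal H_{n+1}$. $U$ is a one-dimensional quantum walk with one defect if it has such a representation for which there exist $\xi_1,\xi_2,\zeta_1,\zeta_2\in\mathbb C^2$ with $\xi_{n,n+1}=\xi_1$, $\xi_{n,n-1}=\xi_2$, $\zeta_{n-1,n}=\zeta_1$, $\zeta_{n+1,n}=\zeta_2$ for all $n\in\mathbb Z\setminus\{0\}$. Since $U$ and $e^{i\lambda}U$ are identified, unitaries $U_1,U_2$ on $\mathcal H$ are called unitary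 equivalent if there exist $\lambda\in\mathbb R$ and a unitary $W=\bigoplus_nW_n$ ($W_n$ unitary on $\mathcal H_n$) with $e^{i\lambda}WU_1W^*=U_2$. *)

From HB Require Import structures.
From mathcomp Require Import all_boot all_order all_algebra.
From mathcomp Require Import all_classical all_reals all_analysis.
From mathcomp.real_closed Require Import complex.
Set Implicit Arguments. Unset Strict Implicit. Unset Printing Implicit Defensive.
Import Order.TTheory GRing.Theory Num.Theory.
Local Open Scope ring_scope.
Local Open Scope complex_scope.

Section QW.
Variable R : realType.
Local Notation C := R[i].

(* H_n = C^2, realised as column vectors; H = functions int -> C^2 that are
   square summable (l^2(Z; C^2)). *)
Definition vec := 'cV[C]_2.
Definition state := int -> vec.

Definition e (j : 'I_2) : vec := \col_i (if i == j then 1 else 0).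
Definition e1 : vec := e 0.
Definition e2 : vec := e 1.

Definition bra (y z : vec) : C := \sum_(i < 2) Num.conj (y i 0) * z i 0.

Definition sqn (v : vec) : R :=
  \sum_(i < 2) ((complex.Re (v i 0)) ^+ 2 + (complex.Im (v i 0)) ^+ 2).

Definition l2norm2 (f : state) : \bar R :=
  (\esum_(n in [set: int]) (sqn (f n))%:E)%E.

Definition l2 (f : state) : Prop := (l2norm2 f < +oo)%E.

(* Operators on H are represented by maps on states; only their values on
   l2 matter. *)
Definition op := state -> state.

Definition op_eq (A B : op) : Prop := forall f, l2 f -> A f = B f.

Definition unitary (U : op) : Prop :=
  [/\ (forall (a : C) (f g : state), l2 f -> l2 g ->
          U (fun n => a *: f n + g n) = (fun n => a *: U f n + U g n)),
      (forall f, l2 f -> l2 (U f) /\ l2norm2 (U f) = l2norm2 f) &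
      (forall g, l2 g -> exists2 f, l2 f & U f = g)].

Definition at_site (m : int) (v : vec) : state :=
  fun k => if k == m then v else 0.

(* the 2x2 matrix of P_n U P_m restricted to H_m -> H_n (P_n U P_m vanishes on
   the orthogonal complement of H_m), so rank(P_n U P_m) = \rank (block U n m) *)
Definition block (U : op) (n m : int) : 'M[C]_2 :=
  \matrix_(i < 2, j < 2) (U (at_site m (e j)) n i 0).

Definition quantum_walk (U : op) : Prop :=
  unitary U /\
  forall n m : int,
    \rank (block U n m) = (if (m == n + 1) || (m == n - 1) then 1%N else 0%N).

Definition orthonormal2 (x y : vec) : Prop :=
  [/\ bra x x = 1, bra y y = 1 & bra x y = 0].

(* The operator  sum_n |xi_{n-1,n}><zeta_{n-1,n}| + |xi_{n+1,n}><zeta_{n+1,n}|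
   with  xiR n = xi_{n,n+1}, xiL n = xi_{n,n-1}  (in H_n) and
   zetaL n = zeta_{n-1,n}, zetaR n = zeta_{n+1,n} (in H_n). *)
Definition walk_op (xiR xiL zetaL zetaR : int -> vec) : op :=
  fun f k => bra (zetaL (k + 1)) (f (k + 1)) *: xiR k
           + bra (zetaR (k - 1)) (f (k - 1)) *: xiL k.

Definition qw_one_defect (U : op) : Prop :=
  quantum_walk U /\
  exists (xiR xiL zetaL zetaR : int -> vec),
    [/\ forall n, orthonormal2 (xiR n) (xiL n),
        forall n, orthonormal2 (zetaL n) (zetaR n),
        op_eq U (walk_op xiR xiL zetaL zetaR) &
        exists xi1 xi2 zeta1 zeta2 : vec,
          forall n : int, n != 0 ->
            [/\ xiR n = xi1, xiL n = xi2, zetaL n = zeta1 & zetaR n = zeta2]].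

Definition expi (t : R) : C := cos t +i* sin t.

Definition cR (x : R) : C := x%:C.

Definition sfun (r : R) : R := Num.sqrt (1 - r ^+ 2).

Definition braL (rpm r0 nu1 nu2 : R) (n : int) : vec :=
  if n == 0 then cR r0 *: e1 + (expi nu1 * cR (sfun r0)) *: e2
  else cR rpm *: e1 + cR (sfun rpm) *: e2.
Definition braR (rpm r0 nu1 nu2 : R) (n : int) : vec :=
  if n == 0 then (- (expi nu2 * cR (sfun r0))) *: e1
                 + (expi (nu1 + nu2) * cR r0) *: e2
  else (- cR (sfun rpm)) *: e1 + cR rpm *: e2.

(* U_{r_pm,r_0,nu_1,nu_2} = sum_n |e_1^{n-1}><braL n| + |e_2^{n+1}><braR n| *)
Definition Ustd (rpm r0 nu1 nu2 : R) : op :=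
  fun f k => bra (braL rpm r0 nu1 nu2 (k + 1)) (f (k + 1)) *: e1
           + bra (braR rpm r0 nu1 nu2 (k - 1)) (f (k - 1)) *: e2.

Definition adj2 (M : 'M[C]_2) : 'M[C]_2 := (map_mx Num.conj M)^T.

Definition unitary2 (M : 'M[C]_2) : Prop := adj2 M *m M = 1%:M /\ M *m adj2 M = 1%:M.

Definition unit_equiv (U1 U2 : op) : Prop :=
  exists (lambda : R) (W : int -> 'M[C]_2),
    (forall n, unitary2 (W n)) /\
    op_eq (fun f k => expi lambda *: (W k *m U1 (fun n => adj2 (W n) *m f n) k)) U2.

End QW.

From Pilot Require Import Defs.
From HB Require Import structures.
From mathcomp Require Import all_boot all_order all_algebra.
From mathcomp Require Import all_classical all_reals all_analysis.
From mathcomp.real_closed Require Import complex.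
From mathcomp Require Import ring lra zify.
Import Order.TTheory GRing.Theory Num.Theory.
Local Open Scope ring_scope.

(* Conjugating by [W_n = diag(al_n, be_n) V_n], where [V_n] sends the orthonormal
   pair (xi_{n,n+1}, xi_{n,n-1}) to (e_1, e_2), turns the walk into one whose bras at site [n]
   are the columns of the unitary coin [V_n (zeta_{n-1,n}, zeta_{n+1,n})], rescaled by phases.
   Every unitary 2x2 coin has the polar form [[rho0 r, -E rho1^* s], [rho1 s, E rho0^* r]]
   with unimodular [rho0, rho1, E].  Away from the defect all these phases are absorbed by a
   global phase [mu] with [mu^2 = E] and gauge phases in geometric progression of ratio
   [mu / rho0]; the jump of the progression at the defect absorbs all but two phases of the
   defect coin, which become [nu1] and [nu2].
   Conversely, an equivalence between two normal forms is diagonal at every site (test it on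
   vectors supported at one site).  As [r, s, r0, s0] are then strictly positive, comparing
   entries forces [be_n = mu al_{n-1}], [al_n = mu be_{n+1}] and [mu^2 = 1], which pins down
   every parameter. *)

Set Implicit Arguments.
Unset Strict Implicit.
Unset Printing Implicit Defensive.

Section OneDefectWalk.
Variable R : realType.
Local Notation C := R[i].
Local Notation e1 := (e1 R).
Local Notation e2 := (e2 R).
Implicit Types (u v w p q : vec R) (z : C).

(** * Linear algebra in C^2 *)

Lemma ord2P (i : 'I_2) : i = 0 \/ i = 1.
Proof. by case: i => -[|[|//]] Hi; [left|right]; apply: val_inj. Qed.

Lemma sum_ord2 (V : nmodType) (F : 'I_2 -> V) : \sum_(i < 2) F i = F 0 + F 1.
Proof. by rewrite !big_ord_recl big_ord0 addr0; congr (_ + F _); apply: val_inj. Qed.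

Lemma vec2P u v : u 0 0 = v 0 0 -> u 1 0 = v 1 0 -> u = v.
Proof. by move=> h0 h1; apply/matrixP => i j; rewrite (ord1 j); case: (ord2P i) => ->. Qed.

Lemma mx2P (A B : 'M[C]_2) :
  A 0 0 = B 0 0 -> A 0 1 = B 0 1 -> A 1 0 = B 1 0 -> A 1 1 = B 1 1 -> A = B.
Proof.
by move=> h00 h01 h10 h11; apply/matrixP => i j; case: (ord2P i) => ->; case: (ord2P j) => ->.
Qed.

Lemma mulmx2E (A B : 'M[C]_2) i j : (A *m B) i j = A i 0 * B 0 j + A i 1 * B 1 j.
Proof. by rewrite mxE sum_ord2. Qed.

Lemma mulmx2vE (A : 'M[C]_2) v i : (A *m v) i 0 = A i 0 * v 0 0 + A i 1 * v 1 0.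
Proof. by rewrite mxE sum_ord2. Qed.

Lemma scale_e12E (a b : C) : a *: e1 + b *: e2 = \col_i (if i == 0 then a else b).
Proof. by apply: vec2P; rewrite !mxE /= ?mulr0 ?mulr1 ?addr0 ?add0r. Qed.

Lemma scale_e12_inj (a b c d : C) :
  a *: e1 + b *: e2 = c *: e1 + d *: e2 -> a = c /\ b = d.
Proof.
rewrite !scale_e12E => h; have := congr1 (fun v => v 0 0) h.
by have := congr1 (fun v => v 1 0) h; rewrite !mxE.
Qed.

Lemma scale_e1_inj (a b : C) : a *: e1 = b *: e1 -> a = b.
Proof. by move=> /(congr1 (fun v => v 0 0)); rewrite !mxE /= !mulr1. Qed.

Lemma scale_e2_inj (a b : C) : a *: e2 = b *: e2 -> a = b.
Proof. by move=> /(congr1 (fun v => v 1 0)); rewrite !mxE /= !mulr1. Qed.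

(** * Phases *)

Lemma conj_cR (r : R) : (cR r)^* = cR r.
Proof. exact: conjc_real. Qed.

Lemma cR_neq0 (r : R) : 0 < r -> cR r != 0.
Proof. by move=> r_gt0; apply/eqP => /complexI /eqP; rewrite gt_eqF. Qed.

Lemma norm1_neq0 z : `|z| = 1 -> z != 0.
Proof. by move=> hz; rewrite -normr_eq0 hz oner_neq0. Qed.

Lemma conjC_norm1 z : `|z| = 1 -> z^* = z^-1.
Proof. by move=> hz; rewrite invC_norm hz expr1n invr1 mul1r. Qed.

Lemma mulCJ_norm1 z : `|z| = 1 -> z^* * z = 1.
Proof. by move=> hz; rewrite conjC_norm1 // mulVf // norm1_neq0. Qed.

Lemma norm1_conjM_eq1 (a b : C) : `|a| = 1 -> a^* * b = 1 -> b = a.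
Proof.
move=> ha h; rewrite -[b]mul1r -[1](mulCJ_norm1 (etrans (norm_conjC a) ha)).
by rewrite conjCK -mulrA h mulr1.
Qed.

Lemma norm1_exprz z (n : int) : `|z| = 1 -> `|z ^ n| = 1.
Proof. by move=> hz; case: n => k; rewrite /= ?normfV normrX hz expr1n ?invr1. Qed.

Lemma polarC z : exists2 rho : C, `|rho| = 1 & z = rho * `|z|.
Proof.
have [->|z0] := eqVneq z 0; first by exists 1; rewrite ?normr1 // normr0 mulr0.
have nz0 : `|z| != 0 by rewrite normr_eq0.
by exists (z / `|z|); rewrite ?divfK // normrM normfV normr_id mulfV.
Qed.

Lemma unimodular_scale_pos (r r' : R) z :
  0 < r -> 0 < r' -> `|z| = 1 -> cR r' = z * cR r -> r' = r /\ z = 1.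
Proof.
move=> r_gt0 r'_gt0 hz h.
have rr' : cR r' = cR r.
  by have := congr1 Num.norm h; rewrite normrM hz mul1r !ger0_norm // /cR ler0c ltW.
split; first exact: complexI.
by apply: (mulIf (cR_neq0 r_gt0)); rewrite mul1r -h rr'.
Qed.

Lemma expiD (a b : R) : expi (a + b) = expi a * expi b.
Proof. by rewrite /expi cosD sinD /=; congr (Complex _ _); ring. Qed.

Lemma expi0 : expi (0 : R) = 1.
Proof. by rewrite /expi cos0 sin0. Qed.

Lemma norm_expi (t : R) : `|expi t| = 1.
Proof. by rewrite /expi normc_def /= cos2Dsin2 sqrtr1. Qed.

Lemma expi_surj z : `|z| = 1 -> exists t : R, expi t = z.
Proof.
case: z => a b; rewrite normc_def /= => -[sqrt_ab].
have hab : a ^+ 2 + b ^+ 2 = 1.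
  by rewrite -[LHS]sqr_sqrtr ?addr_ge0 ?sqr_ge0 // sqrt_ab expr1n.
have ha : -1 <= a <= 1 by apply/andP; split; nra.
have sin_acos_a : sin (acos a) = `|b|.
  by rewrite sin_acos // -sqrtr_sqr; congr Num.sqrt; lra.
have [b_ge0|b_lt0] := leP 0 b.
  by exists (acos a); rewrite /expi acosK // sin_acos_a ger0_norm.
by exists (- acos a); rewrite /expi cosN sinN acosK // sin_acos_a ltr0_norm ?opprK.
Qed.

Lemma expi_inj (a b : R) :
  0 <= a < 2 * pi -> 0 <= b < 2 * pi -> expi a = expi b -> a = b.
Proof.
move=> /andP[a_ge0 a_lt] /andP[b_ge0 b_lt]; rewrite /expi => -[cos_ab sin_ab].
have pi_gt0 := @pi_gt0 R.
have sin_sep (c d : R) : 0 <= c <= pi -> pi < d < 2 * pi -> sin c != sin d.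
  move=> c_in /andP[d_gt d_lt]; have := sin_ge0_pi c_in.
  have : 0 < sin (d - pi) by apply: sin_gt0_pi; apply/andP; split; lra.
  by rewrite -[in sin d](subrK pi d) sinDpi; lra.
have cos_subpi (c : R) : cos (c - pi) = - cos c.
  by rewrite -[in RHS](subrK pi c) cosDpi opprK.
have [a_le|a_gt] := lerP a pi; have [b_le|b_gt] := lerP b pi.
- by apply: cos_inj; rewrite // in_itv /= ?a_ge0 ?b_ge0.
- by move: (sin_sep a b); rewrite a_ge0 a_le b_gt b_lt sin_ab eqxx => /(_ isT isT).
- by move: (sin_sep b a); rewrite b_ge0 b_le a_gt a_lt sin_ab eqxx => /(_ isT isT).
- suff : a - pi = b - pi by lra.
  by apply: cos_inj; rewrite ?in_itv /= ?cos_subpi ?cos_ab //; apply/andP; split; lra.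
Qed.

Lemma sfun_sq (r : R) : 0 <= r <= 1 -> Defs.sfun r ^+ 2 = 1 - r ^+ 2.
Proof. by move=> /andP[r_ge0 r_le1]; rewrite /Defs.sfun sqr_sqrtr //; nra. Qed.

Lemma sfun_gt0 (r : R) : 0 < r < 1 -> 0 < Defs.sfun r.
Proof. by move=> /andP[r_gt0 r_lt1]; rewrite /Defs.sfun sqrtr_gt0; nra. Qed.

Lemma cR_sfun_sq (r : R) : 0 <= r <= 1 ->
  cR r * cR r + cR (Defs.sfun r) * cR (Defs.sfun r) = 1.
Proof. by move=> hr; rewrite /cR -!rmorphM -rmorphD -!expr2 sfun_sq // subrKC. Qed.

Lemma conj_phase_mul z (x : R) : `|z| = 1 -> (z * cR x)^* * (z * cR x) = cR x * cR x.
Proof. by move=> hz; rewrite rmorphM /= conj_cR mulrACA mulCJ_norm1 ?mul1r. Qed.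

Lemma braE u v : bra u v = (u 0 0)^* * v 0 0 + (u 1 0)^* * v 1 0.
Proof. exact: sum_ord2. Qed.

Lemma bra_e12 (a b c d : C) :
  bra (a *: e1 + b *: e2) (c *: e1 + d *: e2) = a^* * c + b^* * d.
Proof. by rewrite !scale_e12E braE !mxE. Qed.

Lemma braZl z u v : bra (z *: u) v = z^* * bra u v.
Proof. by rewrite !braE !mxE !rmorphM; ring. Qed.

Lemma braZr z u v : bra u (z *: v) = z * bra u v.
Proof. by rewrite !braE !mxE; ring. Qed.

Lemma bra0r u : bra u 0 = 0.
Proof. by rewrite braE !mxE !mulr0 addr0. Qed.

Lemma conj_bra u v : (bra u v)^* = bra v u.
Proof. by rewrite !braE rmorphD !rmorphM /= !conjCK; ring. Qed.

Lemma bra_ext u w : (forall v, bra u v = bra w v) -> u = w.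
Proof.
move=> huw; have := huw e1; have := huw e2; rewrite !braE !mxE /=.
rewrite !mulr0 !mulr1 !addr0 !add0r => h1 h0.
by apply: vec2P; apply: (inv_inj (@conjCK C)).
Qed.

Lemma sqn_bra u : cR (sqn u) = bra u u.
Proof.
rewrite /sqn sum_ord2 braE /cR rmorphD /= !add_Re2_Im2 !normCK.
by rewrite [_ * (_ ^*)]mulrC [u 1 0 * _]mulrC.
Qed.

Lemma adj2K (M : 'M[C]_2) : adj2 (adj2 M) = M.
Proof. by apply/matrixP => i j; rewrite !mxE conjCK. Qed.

Lemma adj2_mul (A B : 'M[C]_2) : adj2 (A *m B) = adj2 B *m adj2 A.
Proof. by rewrite /adj2 map_mxM trmx_mul. Qed.

Lemma adj2_1 : adj2 (1%:M : 'M[C]_2) = 1%:M.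
Proof. by apply: mx2P; rewrite !mxE /= ?conjC1 ?conjC0. Qed.

Lemma bra_adj2 (M : 'M[C]_2) u v : bra (M *m u) v = bra u (adj2 M *m v).
Proof. by rewrite !braE !mulmx2vE /adj2 !mxE !rmorphD !rmorphM ?conjCK; ring. Qed.

Lemma unitary2_1 : unitary2 (1%:M : 'M[C]_2).
Proof. by rewrite /unitary2 adj2_1 mulmx1. Qed.

Lemma unitary2_adj (M : 'M[C]_2) : unitary2 M -> unitary2 (adj2 M).
Proof. by case=> h1 h2; split; rewrite adj2K. Qed.

Lemma unitary2_mul (A B : 'M[C]_2) : unitary2 A -> unitary2 B -> unitary2 (A *m B).
Proof.
move=> [hA1 hA2] [hB1 hB2]; rewrite /unitary2 adj2_mul !mulmxA.
rewrite -[adj2 B *m _ *m A]mulmxA hA1 mulmx1 hB1.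
by rewrite -[A *m B *m _]mulmxA hB2 mulmx1.
Qed.

Lemma bra_unitary2 (M : 'M[C]_2) u v : unitary2 M -> bra (M *m u) (M *m v) = bra u v.
Proof. by case=> hM _; rewrite bra_adj2 mulmxA hM mul1mx. Qed.

Lemma sqn_unitary2 (M : 'M[C]_2) u : unitary2 M -> sqn (M *m u) = sqn u.
Proof. by move=> hM; apply: complexI; rewrite -!/(cR _) !sqn_bra bra_unitary2. Qed.

Lemma unitary2_eigen_norm (M : 'M[C]_2) v c :
  unitary2 M -> bra v v = 1 -> M *m v = c *: v -> `|c| = 1.
Proof.
move=> hM hv hMv; have := bra_unitary2 v v hM; rewrite hMv braZl braZr hv mulr1.
by move=> hc; apply/eqP; rewrite -(sqrp_eq1 (normr_ge0 c)) normCKC hc.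
Qed.

Lemma mulmx_e1_line (M : 'M[C]_2) c d :
  c != 0 -> c *: (M *m e1) = d *: e1 -> M *m e1 = M 0 0 *: e1.
Proof.
move=> c0 /(congr1 (fun v => v 1 0)); rewrite mxE mulmx2vE !mxE /= !mulr0 !mulr1 addr0.
move=> /eqP; rewrite mulf_eq0 (negbTE c0) /= => /eqP M10.
by apply: vec2P; rewrite mulmx2vE !mxE /= ?M10 !mulr1 ?mulr0 ?addr0.
Qed.

Lemma mulmx_e2_line (M : 'M[C]_2) c d :
  c != 0 -> c *: (M *m e2) = d *: e2 -> M *m e2 = M 1 1 *: e2.
Proof.
move=> c0 /(congr1 (fun v => v 0 0)); rewrite mxE mulmx2vE !mxE /= !mulr0 !mulr1 add0r.
move=> /eqP; rewrite mulf_eq0 (negbTE c0) /= => /eqP M01.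
by apply: vec2P; rewrite mulmx2vE !mxE /= ?M01 !mulr1 ?mulr0 ?add0r.
Qed.

Definition diag2 (a b : C) : 'M[C]_2 :=
  \matrix_(i, j) (if i == j then (if i == 0 then a else b) else 0).

Lemma diag2_e12 (a b c d : C) :
  diag2 a b *m (c *: e1 + d *: e2) = (a * c) *: e1 + (b * d) *: e2.
Proof. by rewrite !scale_e12E; apply: vec2P; rewrite mulmx2vE !mxE /= ?mul0r ?addr0 ?add0r. Qed.

Lemma diag2_e1 (a b : C) : diag2 a b *m e1 = a *: e1.
Proof. by apply: vec2P; rewrite mulmx2vE !mxE /= ?mulr0 ?mulr1 ?addr0. Qed.

Lemma diag2_e2 (a b : C) : diag2 a b *m e2 = b *: e2.
Proof. by apply: vec2P; rewrite mulmx2vE !mxE /= ?mulr0 ?mulr1 ?add0r. Qed.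

Lemma diag2_unitary (a b : C) : `|a| = 1 -> `|b| = 1 -> unitary2 (diag2 a b).
Proof.
move=> ha hb; suff h : adj2 (diag2 a b) *m diag2 a b = 1%:M by split=> //; apply: mulmx1C.
by apply: mx2P; rewrite mulmx2E /adj2 !mxE /= ?conjC0 ?mulr0 ?mul0r ?addr0 ?add0r ?mulCJ_norm1.
Qed.

Lemma mx2_diag (M : 'M[C]_2) (a b : C) :
  M *m e1 = a *: e1 -> M *m e2 = b *: e2 -> M = diag2 a b.
Proof.
move=> h1 h2; have := congr1 (fun v => v 0 0) h1; have := congr1 (fun v => v 1 0) h1.
have := congr1 (fun v => v 0 0) h2; have := congr1 (fun v => v 1 0) h2.
rewrite /= !mulmx2vE !mxE /= !mulr0 !mulr1 ?addr0 ?add0r => *.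
by apply: mx2P; rewrite !mxE.
Qed.

Definition frame_mx u w : 'M[C]_2 := \matrix_(i, j) (if i == 0 then u j 0 else w j 0)^*.

Lemma frame_mxE u w v : frame_mx u w *m v = bra u v *: e1 + bra w v *: e2.
Proof. by rewrite scale_e12E; apply: vec2P; rewrite mulmx2vE !braE !mxE. Qed.

Lemma frame_mx_unitary u w : orthonormal2 u w -> unitary2 (frame_mx u w).
Proof.
move=> [hu hw huw]; have hwu : bra w u = 0 by rewrite -conj_bra huw conjC0.
suff h : frame_mx u w *m adj2 (frame_mx u w) = 1%:M by split=> //; apply: mulmx1C.
move: hu hw huw hwu; rewrite !braE => hu hw huw hwu.
by apply: mx2P; rewrite mulmx2E /adj2 !mxE /= !conjCK.
Qed.

Lemma frame_mx_first u w : orthonormal2 u w -> frame_mx u w *m u = e1.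
Proof.
by case=> hu _ huw; rewrite frame_mxE hu -conj_bra huw conjC0 scale0r addr0 scale1r.
Qed.

Lemma frame_mx_second u w : orthonormal2 u w -> frame_mx u w *m w = e2.
Proof. by case=> _ hw huw; rewrite frame_mxE hw huw scale0r add0r scale1r. Qed.

(** * Walk operators and unitary equivalence *)

Lemma l2_at_site (m : int) v : l2 (at_site m v).
Proof.
rewrite /l2 /l2norm2 (_ : (fun n => _) = fun n =>
  if n \in [set m]%classic then (sqn v)%:E else 0%E); last first.
  apply: funext => n; rewrite /at_site; case: eqP => [->|nm]; first by rewrite mem_set.
  rewrite memNset //; congr (_%:E); apply: complexI.
  by rewrite -/(cR _) sqn_bra bra0r.
rewrite -esum_mkcond esum_set1 ?ltry // lee_fin.
by rewrite /sqn sumr_ge0 // => i _; rewrite addr_ge0 ?sqr_ge0.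
Qed.

Lemma l2_unitary2 (W : int -> 'M[C]_2) (f : state R) :
  (forall n, unitary2 (W n)) -> l2 f -> l2 (fun n => W n *m f n).
Proof.
move=> hW; rewrite /l2 /l2norm2.
by under [X in (X < _)%E -> _]eq_esum => n _ do rewrite -(sqn_unitary2 (f n) (hW n)).
Qed.

Lemma at_site_mul (A : int -> 'M[C]_2) (m : int) v :
  (fun n => A n *m at_site m v n) = at_site m (A m *m v).
Proof. by apply: funext => n; rewrite /at_site; case: eqP => [->|]; rewrite ?mulmx0. Qed.

Lemma walk_op_at_site_prev xiR xiL zL zR (m : int) v :
  walk_op xiR xiL zL zR (at_site m v) (m - 1) = bra (zL m) v *: xiR (m - 1).
Proof.
rewrite /walk_op /at_site subrK eqxx ifF ?bra0r ?scale0r ?addr0 //.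
by apply/eqP; lia.
Qed.

Lemma walk_op_at_site_next xiR xiL zL zR (m : int) v :
  walk_op xiR xiL zL zR (at_site m v) (m + 1) = bra (zR m) v *: xiL (m + 1).
Proof.
rewrite /walk_op /at_site addrK eqxx ifF ?bra0r ?scale0r ?add0r //.
by apply/eqP; lia.
Qed.

Lemma unit_equiv_refl (U : op R) : unit_equiv U U.
Proof.
exists 0, (fun=> 1%:M); split=> [n|f _]; first exact: unitary2_1.
rewrite expi0 adj2_1; apply: funext => k; rewrite scale1r mul1mx.
by congr U; apply: funext => n; rewrite mul1mx.
Qed.

Lemma walk_unit_equiv_gauge (U : op R) xiR xiL zL zR (W : int -> 'M[C]_2)
    (lam : R) (al be : int -> C) :
  op_eq U (walk_op xiR xiL zL zR) -> (forall n, unitary2 (W n)) ->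
  (forall n, W n *m xiR n = al n *: e1) -> (forall n, W n *m xiL n = be n *: e2) ->
  unit_equiv U (walk_op (fun=> e1) (fun=> e2)
    (fun n => (expi lam * al (n - 1))^* *: (W n *m zL n))
    (fun n => (expi lam * be (n + 1))^* *: (W n *m zR n))).
Proof.
move=> hU hW hxiR hxiL; exists lam, W; split=> // f lf; apply: funext => k.
rewrite hU; last by apply: l2_unitary2 => // n; apply: unitary2_adj.
rewrite /walk_op mulmxDr -!scalemxAr hxiR hxiL !braZl !rmorphM /= !conjCK -!bra_adj2.
by rewrite addrK subrK scalerDr !scalerA; congr (_ *: _ + _ *: _); ring.
Qed.

Lemma std_walk_unit_equiv_diag (zL zR zL' zR' : int -> vec R) :
  (forall n, bra (zL n) (zL n) = 1) -> (forall n, bra (zR n) (zR n) = 1) ->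
  unit_equiv (walk_op (fun=> e1) (fun=> e2) zL zR)
             (walk_op (fun=> e1) (fun=> e2) zL' zR') ->
  exists (mu : C) (al be : int -> C),
    [/\ `|mu| = 1, forall n, `|al n| = 1 /\ `|be n| = 1,
        forall n, zL' n = (mu * al (n - 1))^* *: (diag2 (al n) (be n) *m zL n) &
        forall n, zR' n = (mu * be (n + 1))^* *: (diag2 (al n) (be n) *m zR n)].
Proof.
move=> hL hR [lam [W [hW hUW]]]; have mu0 := norm1_neq0 (norm_expi lam).
have site m v k : expi lam *: (W k *m walk_op (fun=> e1) (fun=> e2) zL zR
      (at_site m (adj2 (W m) *m v)) k) = walk_op (fun=> e1) (fun=> e2) zL' zR' (at_site m v) k.
  rewrite -(at_site_mul (fun n => adj2 (W n))).
  by have := hUW _ (l2_at_site m v) => /(congr1 (fun F => F k)).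
have HL m v : bra (W m *m zL m) v *: (expi lam *: (W (m - 1) *m e1)) = bra (zL' m) v *: e1.
  rewrite -[RHS](walk_op_at_site_prev (fun=> e1) (fun=> e2) zL' zR') -site.
  by rewrite walk_op_at_site_prev -scalemxAr -bra_adj2 !scalerA mulrC.
have HR m v : bra (W m *m zR m) v *: (expi lam *: (W (m + 1) *m e2)) = bra (zR' m) v *: e2.
  rewrite -[RHS](walk_op_at_site_next (fun=> e1) (fun=> e2) zL' zR') -site.
  by rewrite walk_op_at_site_next -scalemxAr -bra_adj2 !scalerA mulrC.
(* Testing at site [k + 1] on the unit vector [W (k + 1) *m zL (k + 1)] shows that
   [W k] maps [e1] into its own line; similarly for [e2] at site [k - 1]. *)
have We1 k : W k *m e1 = W k 0 0 *: e1.
  have := HL (k + 1) (W (k + 1) *m zL (k + 1)).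
  by rewrite bra_unitary2 // hL scale1r addrK; apply: mulmx_e1_line.
have We2 k : W k *m e2 = W k 1 1 *: e2.
  have := HR (k - 1) (W (k - 1) *m zR (k - 1)).
  by rewrite bra_unitary2 // hR scale1r subrK; apply: mulmx_e2_line.
have e1_unit : bra e1 e1 = 1 by rewrite braE !mxE /= conjC1 conjC0 !mulr1 mulr0 addr0.
have e2_unit : bra e2 e2 = 1 by rewrite braE !mxE /= conjC1 conjC0 !mulr1 mulr0 add0r.
exists (expi lam), (fun k => W k 0 0), (fun k => W k 1 1); split=> [|n|n|n].
- exact: norm_expi.
- by split; [apply: unitary2_eigen_norm (We1 n) | apply: unitary2_eigen_norm (We2 n)].
- apply: bra_ext => v; rewrite braZl conjCK -(mx2_diag (We1 n) (We2 n)).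
  by have := HL n v; rewrite We1 !scalerA => /scale_e1_inj <-; rewrite [RHS]mulrC mulrA.
- apply: bra_ext => v; rewrite braZl conjCK -(mx2_diag (We1 n) (We2 n)).
  by have := HR n v; rewrite We2 !scalerA => /scale_e2_inj <-; rewrite [RHS]mulrC mulrA.
Qed.

Lemma UstdE (rpm r0 nu1 nu2 : R) : Ustd rpm r0 nu1 nu2 =
  walk_op (fun=> e1) (fun=> e2) (braL rpm r0 nu1 nu2) (braR rpm r0 nu1 nu2).
Proof. by []. Qed.

Lemma braL_unit (rpm r0 nu1 nu2 : R) n : 0 <= rpm <= 1 -> 0 <= r0 <= 1 ->
  bra (braL rpm r0 nu1 nu2 n) (braL rpm r0 nu1 nu2 n) = 1.
Proof.
move=> hr hr0; rewrite /braL; case: eqP => _; rewrite bra_e12 !conj_cR ?cR_sfun_sq //.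
by rewrite conj_phase_mul ?norm_expi ?cR_sfun_sq.
Qed.

Lemma braR_unit (rpm r0 nu1 nu2 : R) n : 0 <= rpm <= 1 -> 0 <= r0 <= 1 ->
  bra (braR rpm r0 nu1 nu2 n) (braR rpm r0 nu1 nu2 n) = 1.
Proof.
move=> hr hr0; rewrite /braR; case: eqP => _; rewrite bra_e12 rmorphN mulrNN.
  by rewrite !conj_phase_mul ?norm_expi // addrC cR_sfun_sq.
by rewrite /= !conj_cR addrC cR_sfun_sq.
Qed.

(** * The normal form *)

Lemma orthonormal2_complement p q : orthonormal2 p q ->
  exists2 E : C, `|E| = 1 & q = (- (E * (p 1 0)^*)) *: e1 + (E * (p 0 0)^*) *: e2.
Proof.
rewrite /orthonormal2 !braE => -[hp hq hpq].
set E := p 0 0 * q 1 0 - p 1 0 * q 0 0.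
have q0E : q 0 0 = - (E * (p 1 0)^*).
  have : q 0 0 * ((p 0 0)^* * p 0 0 + (p 1 0)^* * p 1 0) + E * (p 1 0)^* =
         p 0 0 * ((p 0 0)^* * q 0 0 + (p 1 0)^* * q 1 0) by rewrite /E; ring.
  by rewrite hp hpq mulr1 mulr0 => /eqP; rewrite addr_eq0 => /eqP.
have q1E : q 1 0 = E * (p 0 0)^*.
  have : q 1 0 * ((p 0 0)^* * p 0 0 + (p 1 0)^* * p 1 0) - E * (p 0 0)^* =
         p 1 0 * ((p 0 0)^* * q 0 0 + (p 1 0)^* * q 1 0) by rewrite /E; ring.
  by rewrite hp hpq mulr1 mulr0 => /eqP; rewrite subr_eq0 => /eqP.
exists E; last by rewrite scale_e12E; apply: vec2P; rewrite !mxE.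
have normE2 : `|E| ^+ 2 = 1.
  rewrite normCK -hq q0E q1E -[E * E^*]mulr1 -hp !rmorphN !rmorphM /= !conjCK; ring.
by apply/eqP; rewrite -(sqrp_eq1 (normr_ge0 E)) normE2.
Qed.

Lemma unit_vec_polar p : bra p p = 1 ->
  exists r (rho0 rho1 : C), [/\ 0 <= r <= 1, `|rho0| = 1, `|rho1| = 1 &
    p = (rho0 * cR r) *: e1 + (rho1 * cR (Defs.sfun r)) *: e2].
Proof.
move=> hp; set A := complex.Re (p 0 0) ^+ 2 + complex.Im (p 0 0) ^+ 2.
set B := complex.Re (p 1 0) ^+ 2 + complex.Im (p 1 0) ^+ 2.
have A_ge0 : 0 <= A by rewrite addr_ge0 ?sqr_ge0.
have B_ge0 : 0 <= B by rewrite addr_ge0 ?sqr_ge0.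
have AB1 : A + B = 1.
  have sqnE : sqn p = A + B by rewrite /sqn sum_ord2.
  by apply: complexI; rewrite -sqnE -/(cR _) sqn_bra hp.
have [rho0 h0 p0E] := polarC (p 0 0); have [rho1 h1 p1E] := polarC (p 1 0).
exists (Num.sqrt A), rho0, rho1; split=> //.
  by rewrite sqrtr_ge0 /= -sqrtr1 ler_sqrt //; lra.
rewrite /Defs.sfun sqr_sqrtr // (_ : 1 - A = B); last by lra.
rewrite scale_e12E; apply: vec2P; rewrite !mxE /=.
  by rewrite {1}p0E normc_def.
by rewrite {1}p1E normc_def.
Qed.

Lemma coin_polar p q : orthonormal2 p q ->
  exists r (rho0 rho1 E : C),
    [/\ 0 <= r <= 1, [/\ `|rho0| = 1, `|rho1| = 1 & `|E| = 1],
        p = (rho0 * cR r) *: e1 + (rho1 * cR (Defs.sfun r)) *: e2 &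
        q = (- (E * rho1^* * cR (Defs.sfun r))) *: e1 + (E * rho0^* * cR r) *: e2].
Proof.
move=> hpq; have [E hE ->] := orthonormal2_complement hpq.
have [r [rho0 [rho1 [hr h0 h1 pE]]]] := unit_vec_polar (let: And3 hp _ _ := hpq in hp).
exists r, rho0, rho1, E; split=> //.
by rewrite pE !mxE /= !mulr0 !mulr1 addr0 add0r !rmorphM /= !conj_cR !mulrA.
Qed.

Lemma unimodular_seq_ratio (x y : C) : `|x| = 1 -> `|y| = 1 ->
  exists al : int -> C, [/\ forall n, `|al n| = 1,
    forall n, n != 0 -> al n = al (n - 1) * x & al 0 = al (-1) * y].
Proof.
move=> hx hy; have x0 := norm1_neq0 hx.
exists (fun n => x ^ n * (if 0 <= n then y / x else 1)); split => [n|n n0|].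
- rewrite normrM norm1_exprz //; case: ifP => _; last by rewrite normr1 mulr1.
  by rewrite normrM normfV hx hy invr1 !mulr1.
- have -> : (0 <= n) = (0 <= n - 1) by apply/idP/idP; lia.
  by rewrite -{1}(subrK 1 n) expfzDr // expr1z mulrAC.
- by rewrite exprN1 /= (_ : x ^ 0 = 1) // mul1r mulr1 mulrC.
Qed.

Lemma gauge_generic_site (mu a rho0 rho1 c d : C) :
  `|mu| = 1 -> `|a| = 1 -> `|rho0| = 1 -> `|rho1| = 1 ->
  let D := diag2 (a * (mu / rho0)) (a * (mu / rho1)) in
  (mu * a)^* *: (D *m ((rho0 * c) *: e1 + (rho1 * d) *: e2)) = c *: e1 + d *: e2 /\
  (mu * (a * (mu / rho0) * (mu / rho1)))^* *:
    (D *m ((- (mu * mu * rho1^* * d)) *: e1 + (mu * mu * rho0^* * c) *: e2))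
    = (- d) *: e1 + c *: e2.
Proof.
move=> hmu ha h0 h1 D; rewrite !diag2_e12 !scalerDr !scalerA.
rewrite !(rmorphM, fmorphV) /= !conjC_norm1 //.
by split; congr (_ *: _ + _ *: _); field; rewrite ?norm1_neq0.
Qed.

Lemma gauge_defect_site (mu a rho1 sigma0 sigma1 F c d : C) :
  `|mu| = 1 -> `|a| = 1 -> `|rho1| = 1 -> `|sigma0| = 1 -> `|sigma1| = 1 ->
  let D := diag2 (a * (mu / sigma0)) (a * (mu / rho1)) in
  let phi1 := sigma1 / rho1 in let phi2 := F * rho1 / (mu * mu * sigma1) in
  (mu * a)^* *: (D *m ((sigma0 * c) *: e1 + (sigma1 * d) *: e2))
    = c *: e1 + (phi1 * d) *: e2 /\
  (mu * (a * (mu / sigma0) * (mu / rho1)))^* *: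
    (D *m ((- (F * sigma1^* * d)) *: e1 + (F * sigma0^* * c) *: e2))
    = (- (phi2 * d)) *: e1 + (phi1 * phi2 * c) *: e2.
Proof.
move=> hmu ha h1 hs0 hs1 D phi1 phi2; rewrite !diag2_e12 !scalerDr !scalerA.
rewrite !(rmorphM, fmorphV) /= !conjC_norm1 //.
by split; congr (_ *: _ + _ *: _); rewrite /phi1 /phi2; field; rewrite ?norm1_neq0.
Qed.

Lemma one_defect_coin_gauge (coinL coinR : int -> vec R) :
  (forall n, orthonormal2 (coinL n) (coinR n)) ->
  (forall n, n != 0 -> coinL n = coinL 1 /\ coinR n = coinR 1) ->
  exists (r r0 nu1 nu2 lam : R) (al be : int -> C),
    [/\ 0 <= r <= 1, 0 <= r0 <= 1, forall n, `|al n| = 1 /\ `|be n| = 1,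
        forall n, braL r r0 nu1 nu2 n =
          (expi lam * al (n - 1))^* *: (diag2 (al n) (be n) *m coinL n) &
        forall n, braR r r0 nu1 nu2 n =
          (expi lam * be (n + 1))^* *: (diag2 (al n) (be n) *m coinR n)].
Proof.
move=> coin_on coin_const.
have [r [rho0 [rho1 [E [hr [h0 h1 hE] pE qE]]]]] := coin_polar (coin_on 1).
have [r0 [sigma0 [sigma1 [F [hr0 [hs0 hs1 hF] p0E q0E]]]]] := coin_polar (coin_on 0).
(* [mu] is the global phase of the equivalence: the generic coin forces [mu ^+ 2 = E]. *)
have [theta thetaE] := expi_surj hE.
pose mu := expi (theta / 2).
have hmu : `|mu| = 1 := norm_expi _.
have muE : mu * mu = E by rewrite -expiD -splitr.
rewrite -muE in qE.
have [nu1 nu1E] : exists nu1, expi nu1 = sigma1 / rho1.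
  by apply: expi_surj; rewrite !(normrM, normfV) hs1 h1 invr1 mulr1.
have [nu2 nu2E] : exists nu2, expi nu2 = F * rho1 / (mu * mu * sigma1).
  by apply: expi_surj; rewrite !(normrM, normfV) hF h1 hmu hs1 !(mulr1, invr1).
have [al [hal al_gen al_0]] : exists al : int -> C, [/\ forall n, `|al n| = 1,
    forall n, n != 0 -> al n = al (n - 1) * (mu / rho0) & al 0 = al (-1) * (mu / sigma0)].
  by apply: unimodular_seq_ratio; rewrite !(normrM, normfV) hmu ?h0 ?hs0 invr1 mulr1.
pose be n := al (n - 1) * (mu / rho1).
exists r, r0, nu1, nu2, (theta / 2), al, be; split=> // [n|n|n].
- by rewrite !(normrM, normfV) hal hmu h1 !(mulr1, invr1).
- rewrite /braL /be; case: eqVneq => [->|n0].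
    rewrite p0E al_0 sub0r nu1E.
    by case: (gauge_defect_site F (cR r0) (cR (Defs.sfun r0)) hmu (hal (-1)) h1 hs0 hs1).
  rewrite (coin_const n n0).1 pE (al_gen n n0).
  by case: (gauge_generic_site (cR r) (cR (Defs.sfun r)) hmu (hal (n - 1)) h0 h1).
- rewrite /braR /be addrK; case: eqVneq => [->|n0].
    rewrite q0E al_0 sub0r expiD nu1E nu2E.
    by case: (gauge_defect_site F (cR r0) (cR (Defs.sfun r0)) hmu (hal (-1)) h1 hs0 hs1).
  rewrite (coin_const n n0).2 qE (al_gen n n0).
  by case: (gauge_generic_site (cR r) (cR (Defs.sfun r)) hmu (hal (n - 1)) h0 h1).
Qed.

Lemma one_defect_std_form (U : op R) : qw_one_defect U ->
  exists rpm r0 nu1 nu2 : R,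
    [/\ 0 <= rpm <= 1, 0 <= r0 <= 1 & unit_equiv U (Ustd rpm r0 nu1 nu2)].
Proof.
case=> _ [xiR [xiL [zL [zR [hxi hz hU [xi1 [xi2 [z1 [z2 hconst]]]]]]]]].
pose V n := frame_mx (xiR n) (xiL n).
have hV n : unitary2 (V n) := frame_mx_unitary (hxi n).
have coin_on n : orthonormal2 (V n *m zL n) (V n *m zR n).
  by case: (hz n) => *; split; rewrite bra_unitary2.
have coin_const n : n != 0 -> V n *m zL n = V 1 *m zL 1 /\ V n *m zR n = V 1 *m zR 1.
  move=> n0; rewrite /V; case: (hconst n n0) => -> -> -> ->.
  by case: (hconst 1 isT) => -> -> -> ->.
have [r [r0 [nu1 [nu2 [lam [al [be [hr hr0 hab gaugeL gaugeR]]]]]]]] :=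
  one_defect_coin_gauge coin_on coin_const.
exists r, r0, nu1, nu2; split=> //.
pose W n := diag2 (al n) (be n) *m V n.
rewrite UstdE.
have -> : braL r r0 nu1 nu2 = fun n => (expi lam * al (n - 1))^* *: (W n *m zL n).
  by apply: funext => n; rewrite gaugeL mulmxA.
have -> : braR r r0 nu1 nu2 = fun n => (expi lam * be (n + 1))^* *: (W n *m zR n).
  by apply: funext => n; rewrite gaugeR mulmxA.
apply: (walk_unit_equiv_gauge lam hU) => n.
- by apply: unitary2_mul (hV n); case: (hab n); apply: diag2_unitary.
- by rewrite -mulmxA frame_mx_first ?diag2_e1.
- by rewrite -mulmxA frame_mx_second ?diag2_e2.
Qed.

(** * Rigidity of the normal form *)

Section NormalFormRigidity.
Variables (rpm r0 nu1 nu2 rpm' r0' nu1' nu2' : R) (mu : C) (al be : int -> C).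
Hypotheses (hrpm : 0 < rpm < 1) (hr0 : 0 < r0 < 1).
Hypotheses (hrpm' : 0 < rpm' < 1) (hr0' : 0 < r0' < 1).
Hypotheses (hmu : `|mu| = 1) (hal : forall n, `|al n| = 1) (hbe : forall n, `|be n| = 1).
Hypothesis gaugeL : forall n, braL rpm' r0' nu1' nu2' n =
  (mu * al (n - 1))^* *: (diag2 (al n) (be n) *m braL rpm r0 nu1 nu2 n).
Hypothesis gaugeR : forall n, braR rpm' r0' nu1' nu2' n =
  (mu * be (n + 1))^* *: (diag2 (al n) (be n) *m braR rpm r0 nu1 nu2 n).

Let norm1_coef (a b : C) : `|a| = 1 -> `|b| = 1 -> `|(mu * a)^* * b| = 1.
Proof. by move=> ha hb; rewrite normrM norm_conjC !normrM hmu ha hb !mulr1. Qed.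

Lemma gauge_generic_coefs n : n != 0 ->
  [/\ cR rpm' = (mu * al (n - 1))^* * al n * cR rpm,
      cR (Defs.sfun rpm') = (mu * al (n - 1))^* * be n * cR (Defs.sfun rpm) &
      cR (Defs.sfun rpm') = (mu * be (n + 1))^* * al n * cR (Defs.sfun rpm)].
Proof.
move=> n0; have := gaugeR n; have := gaugeL n.
rewrite /braL /braR (negbTE n0) !diag2_e12 !scalerDr !scalerA.
by move=> /scale_e12_inj[-> ->] /scale_e12_inj[/eqP + _]; rewrite !mulrN !mulrA eqr_opp => /eqP.
Qed.

Lemma gauge_defect_coefs :
  [/\ cR r0' = (mu * al (-1))^* * al 0 * cR r0,
      expi nu1' * cR (Defs.sfun r0') =
        (mu * al (-1))^* * be 0 * (expi nu1 * cR (Defs.sfun r0)) &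
      expi nu2' * cR (Defs.sfun r0') =
        (mu * be 1)^* * al 0 * (expi nu2 * cR (Defs.sfun r0))].
Proof.
have := gaugeR 0; have := gaugeL 0.
rewrite /braL /braR eqxx sub0r add0r !diag2_e12 !scalerDr !scalerA.
by move=> /scale_e12_inj[-> ->] /scale_e12_inj[/eqP + _]; rewrite !mulrN !mulrA eqr_opp => /eqP.
Qed.

Lemma gauge_rpm : rpm' = rpm.
Proof.
have [hL _ _] := gauge_generic_coefs (oner_neq0 _).
have [/andP[rpm_gt0 _] /andP[rpm'_gt0 _]] := conj hrpm hrpm'.
by case: (unimodular_scale_pos rpm_gt0 rpm'_gt0 (norm1_coef (hal _) (hal _)) hL).
Qed.

Lemma gauge_shift n : n != 0 -> be n = mu * al (n - 1) /\ al n = mu * be (n + 1).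
Proof.
move=> n0; have [_ hL hR] := gauge_generic_coefs n0; rewrite gauge_rpm in hL hR.
have s_gt0 := sfun_gt0 hrpm.
split; apply: norm1_conjM_eq1; rewrite ?(normrM, hmu, hal, hbe, mulr1) //.
- by case: (unimodular_scale_pos s_gt0 s_gt0 (norm1_coef (hal _) (hbe _)) hL).
- by case: (unimodular_scale_pos s_gt0 s_gt0 (norm1_coef (hbe _) (hal _)) hR).
Qed.

Lemma gauge_mu2 : mu * mu = 1.
Proof.
have [_ al1] := @gauge_shift 1 isT; have [be2 _] := @gauge_shift 2 isT.
move: al1; rewrite be2 (_ : 1 + 1 - 1 = 1) // mulrA -{1}[al 1]mul1r => /esym.
exact/mulIf/norm1_neq0.
Qed.

Lemma gauge_defect : [/\ r0' = r0, expi nu1' = expi nu1 & expi nu2' = expi nu2].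
Proof.
have [_ alN1] := @gauge_shift (-1) isT; have [be1 _] := @gauge_shift 1 isT.
have [] := gauge_defect_coefs; rewrite alN1 be1 addNr subrr !mulrA gauge_mu2 !mul1r.
have s0_gt0 := sfun_gt0 hr0; have [/andP[r0_gt0 _] /andP[r0'_gt0 _]] := conj hr0 hr0'.
move=> /(unimodular_scale_pos r0_gt0 r0'_gt0); rewrite normrM norm_conjC hal hbe mulr1.
case=> // r0E /(norm1_conjM_eq1 (hbe 0)) al0E.
rewrite r0E al0E !mulCJ_norm1 ?mul1r // => h1 h2.
by split=> //; apply: (mulIf (cR_neq0 s0_gt0)).
Qed.

End NormalFormRigidity.

Lemma Ustd_unit_equiv_inj (rpm r0 nu1 nu2 rpm' r0' nu1' nu2' : R) :
  0 < rpm < 1 -> 0 < r0 < 1 -> 0 < rpm' < 1 -> 0 < r0' < 1 ->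
  0 <= nu1 < 2 * pi -> 0 <= nu2 < 2 * pi -> 0 <= nu1' < 2 * pi -> 0 <= nu2' < 2 * pi ->
  unit_equiv (Ustd rpm r0 nu1 nu2) (Ustd rpm' r0' nu1' nu2') ->
  [/\ rpm = rpm', r0 = r0', nu1 = nu1' & nu2 = nu2'].
Proof.
move=> hr hr0 hr' hr0' hnu1 hnu2 hnu1' hnu2'.
have unit_closed (x : R) : 0 < x < 1 -> 0 <= x <= 1 by case/andP=> *; rewrite !ltW.
rewrite !UstdE => /std_walk_unit_equiv_diag[n|n|mu [al [be [hmu hab gL gR]]]].
- exact: braL_unit (unit_closed _ hr) (unit_closed _ hr0).
- exact: braR_unit (unit_closed _ hr) (unit_closed _ hr0).
have hal n := (hab n).1; have hbe n := (hab n).2.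
have [r0E nu1E nu2E] := gauge_defect hr hr0 hr' hr0' hmu hal hbe gL gR.
split; first exact/esym/(gauge_rpm hr hr' hmu hal gL).
- by rewrite r0E.
- exact: expi_inj hnu1 hnu1' (esym nu1E).
- exact: expi_inj hnu2 hnu2' (esym nu2E).
Qed.

End OneDefectWalk.

Theorem corollary2p11 (R : realType) :
  (forall U : op R, qw_one_defect U ->
     exists rpm r0 nu1 nu2 : R,
       [/\ 0 <= rpm <= 1, 0 <= r0 <= 1 & unit_equiv U (Ustd rpm r0 nu1 nu2)])
  /\
  (forall rpm r0 nu1 nu2 rpm' r0' nu1' nu2' : R,
     0 < rpm < 1 -> 0 < r0 < 1 -> 0 < rpm' < 1 -> 0 < r0' < 1 ->
     0 <= nu1 < 2 * pi -> 0 <= nu2 < 2 * pi ->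
     0 <= nu1' < 2 * pi -> 0 <= nu2' < 2 * pi ->
     (unit_equiv (Ustd rpm r0 nu1 nu2) (Ustd rpm' r0' nu1' nu2') <->
      [/\ rpm = rpm', r0 = r0', nu1 = nu1' & nu2 = nu2'])).
Proof.
split=> [U|rpm r0 nu1 nu2 rpm' r0' nu1' nu2' *]; first exact: one_defect_std_form.
split; first exact: Ustd_unit_equiv_inj.
by case=> <- <- <- <-; exact: unit_equiv_refl.
Qed.
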